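(* Let $p$ be an odd prime, $P$ a finite $p$-group, $N$ a normal subgroup of $P$, and $j\ge 1$ an integer. If $\operatorname{pwh}_P(N)\le j$, then $[N,{}_jP]\le N^p$.
   Context: For a finite $p$-group $P$, a normal subgroup $N$ of $P$ is powerfully embedded in $P$ if $[N,P]\le N^p$ when $p$ is odd, and $[N,P]\le N^4$ when $p=2$ (here $N^{k}$ denotes the subgroup generated by all $k$-th powers of elements of $N$). An $\eta$-series of $P$ is an ascending series $1=N_0\le N_1\le N_2\le\cdots$ of normal subgroups of $P$ such that $N_{i+1}/N_i$ is powerfully embedded in $P/N_i$ for all $i$. For $N\trianglelefteq P$, the powerful height $\operatorname{pwh}_P(N)$ is the smallest $k$ such that there is an $\eta$-series with $N_k=N$. $[N,{}_jP]$ denotes $[N,P,\ldots,P]$ with $j$ copies of $P$, defined recursively by $[N,{}_1P]=[N,P]$ and $[N,{}_{j+1}P]=[[N,{}_jP],P]$. *)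

From HB Require Import structures.
From mathcomp Require Import all_boot all_fingroup all_solvable.
Set Implicit Arguments. Unset Strict Implicit. Unset Printing Implicit Defensive.
Local Open Scope group_scope.

Definition powg (gT : finGroupType) (k : nat) (N : {set gT}) : {set gT} :=
  <<[set x ^+ k | x in N]>>.

Definition pw_embedded (gT : finGroupType) (p : nat) (N P : {set gT}) : bool :=
  (N <| P) && ([~: N, P] \subset powg (if p == 2 then 4 else p) N).

Definition eta_series (gT : finGroupType) (p : nat) (P : {group gT})
    (Ns : nat -> {group gT}) (k : nat) : Prop :=
  Ns 0 = 1 :> {set gT} /\
  (forall i, i <= k -> Ns i <| P) /\
  (forall i, i < k -> Ns i \subset Ns i.+1) /\
  (forall i, i < k -> pw_embedded p (Ns i.+1 / Ns i) (P / Ns i)).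

(* pwh_P(N) <= j : there is an eta-series with N_k = N for some k <= j
   (equivalently, the least such k is at most j). *)
Definition pwh_le (gT : finGroupType) (p : nat) (P N : {group gT}) (j : nat) : Prop :=
  exists k, exists Ns : nat -> {group gT},
    k <= j /\ eta_series p P Ns k /\ Ns k = N.

Definition comm_iter (gT : finGroupType) (N P : {set gT}) (j : nat) : {set gT} :=
  iter j (fun H => [~: H, P]) N.

From mathcomp Require Import all_boot all_fingroup all_solvable.
From mathcomp Require Import zify.
Set Implicit Arguments. Unset Strict Implicit. Unset Printing Implicit Defensive.
Local Open Scope group_scope.

(* If N_k = N is reached by an eta-series N_0 = 1 <= ... <= N_k, then
   powerful embedding of N_(i+1)/N_i gives [N_(i+1), P] <= N_i N^p, so each
   commutation with P pushes [N, _m P] one step down the series modulo the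
   normal subgroup N^p: [N, _m P] <= N_(k-m) N^p.  For m = k this is N^p,
   and [N, _j P] <= [N, _k P] for j >= k. *)

Section Powers.

Variables (gT : finGroupType) (k : nat).
Implicit Types (A B : {set gT}) (G : {group gT}).

Lemma powg_sub G : powg k G \subset G.
Proof. by rewrite gen_subG; apply/subsetP => _ /imsetP[x Gx ->]; rewrite groupX. Qed.

Lemma powgS A B : A \subset B -> powg k A \subset powg k B.
Proof. by move=> sAB; apply/genS/imsetS. Qed.

Lemma powg_norms A B : B \subset 'N(A) -> B \subset 'N(powg k A).
Proof.
move=> nAB; apply: norms_gen; apply/subsetP => y By; rewrite inE.
apply/subsetP => _ /imsetP[_ /imsetP[x Ax ->] ->].
by rewrite conjXg; apply: imset_f; rewrite memJ_norm // (subsetP nAB).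
Qed.

Lemma morphim_powg (rT : finGroupType) (D : {group gT})
    (f : {morphism D >-> rT}) A :
  A \subset D -> f @* powg k A = powg k (f @* A).
Proof.
move=> sAD; rewrite /powg morphim_gen; last first.
  by apply/subsetP => _ /imsetP[x Ax ->]; rewrite groupX // (subsetP sAD).
congr <<_>>; apply/setP => y; apply/morphimP/imsetP.
- case=> _ _ /imsetP[x Ax ->] ->.
  have Dx := subsetP sAD x Ax.
  by exists (f x); [apply: mem_morphim | rewrite morphX].
- case=> _ /morphimP[x Dx Ax ->] ->.
  by exists (x ^+ k); rewrite ?groupX ?morphX //; apply: imset_f.
Qed.

Lemma quotient_powg (H : {group gT}) A :
  A \subset 'N(H) -> powg k A / H = powg k (A / H).
Proof. exact: morphim_powg. Qed.

Lemma comm_sub_mul_powg (H : {group gT}) A B :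
  A \subset 'N(H) -> B \subset 'N(H) ->
  [~: A / H, B / H] \subset powg k (A / H) ->
  [~: A, B] \subset H * powg k A.
Proof.
move=> nHA nHB sRpow.
have nHR : [~: A, B] \subset 'N(H).
  by apply: subset_trans (commgSS nHA nHB) _; rewrite commg_subl normG.
by rewrite -quotientSK // quotientR // quotient_powg.
Qed.

End Powers.

Section IteratedCommutators.

Variables (gT : finGroupType) (N P : {group gT}).
Hypothesis nNP : P \subset 'N(N).

Lemma comm_iter_norm m : P \subset 'N(comm_iter N P m).
Proof. by elim: m => [|m IHm] //=; rewrite normsR ?normG. Qed.

Lemma comm_iterS m : comm_iter N P m.+1 \subset comm_iter N P m.
Proof.
case: m => [|m] /=; first by rewrite commg_subl.
by rewrite (commg_subl [group of [~: comm_iter N P m, P]]) (comm_iter_norm m.+1).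
Qed.

Lemma comm_iter_leq m n : m <= n -> comm_iter N P n \subset comm_iter N P m.
Proof.
move=> le_mn; rewrite -(subnKC le_mn).
elim: (n - m) => [|d IHd]; first by rewrite addn0.
by rewrite addnS; apply: subset_trans (comm_iterS _) IHd.
Qed.

End IteratedCommutators.

Section EtaSeries.

Variables (gT : finGroupType) (p : nat) (P : {group gT}).
Variables (Ns : nat -> {group gT}) (k : nat).
Hypothesis eta : eta_series p P Ns k.

Local Notation e := (if p == 2 then 4 else p).

Lemma eta_series_sub i : i <= k -> Ns i \subset Ns k.
Proof.
have [_ [_ [sNs _]]] := eta; move=> le_ik; rewrite -(subnKC le_ik) in sNs *.
elim: (k - i) sNs => [|d IHd] sNs; first by rewrite addn0.
by rewrite addnS; apply: (subset_trans (IHd _)) => [j lt_j|]; apply: sNs; lia.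
Qed.

Lemma eta_series_commg i :
  i < k -> [~: Ns i.+1, P] \subset Ns i * powg e (Ns k).
Proof.
have [_ [nNsP [_ pwNs]]] := eta; move=> lt_ik.
have nNsiP : P \subset 'N(Ns i) := normal_norm (nNsP i (ltnW lt_ik)).
have nNsi : Ns i.+1 \subset 'N(Ns i).
  exact: subset_trans (normal_sub (nNsP _ lt_ik)) nNsiP.
apply: subset_trans (mulgS _ (powgS _ (eta_series_sub lt_ik))).
apply: comm_sub_mul_powg => //.
by case/andP: (pwNs i lt_ik).
Qed.

Lemma eta_series_comm_iter m :
  m <= k -> comm_iter (Ns k) P m \subset Ns (k - m) * powg e (Ns k).
Proof.
have [_ [nNsP _]] := eta.
set M := powg e (Ns k).
have nNsP' i : i <= k -> P \subset 'N(Ns i) by move/nNsP/normal_norm.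
have nMP : P \subset 'N(M) by apply/powg_norms/nNsP'.
have sMP : M \subset P by apply: subset_trans (powg_sub _ _) (normal_sub (nNsP k _)).
elim: m => [|m IHm] le_mk; first by rewrite subn0 mulg_subl.
apply: subset_trans (commSg P (IHm (ltnW le_mk))) _.
rewrite commMG; last exact: subset_trans sMP (normsR (nNsP' _ (leq_subr _ _)) (normG P)).
apply: (@subset_trans _ _ (Ns (k - m.+1) * M * M)); last by rewrite -mulgA mulGid.
apply: mulgSS; last by rewrite commg_subl.
by rewrite -(subnSK le_mk); apply: eta_series_commg; lia.
Qed.

End EtaSeries.

Theorem lemma2p2 (gT : finGroupType) (p : nat) (P N : {group gT}) (j : nat) :
  prime p -> odd p -> p.-group P -> N <| P -> 1 <= j ->
  pwh_le p P N j ->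
  comm_iter N P j \subset powg p N.
Proof.
move=> _ odd_p _ nNP _ [k [Ns [le_kj [eta NkN]]]].
have p_neq2 : (p == 2) = false by apply: contraTF odd_p => /eqP->.
apply: subset_trans (comm_iter_leq (normal_norm nNP) le_kj) _.
have := eta_series_comm_iter eta (leqnn k).
by case: eta => Ns0 _; rewrite subnn Ns0 mul1g p_neq2 NkN.
Qed.
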